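(* Let $k$ be a commutative ring, $n\geq 3$ and $m\geq 3$, and let $D_m$ be the dg-category defined below. For all $1\leq i,j\leq m$ there are isomorphisms of graded $k$-modules \[ H_\ast\operatorname{Hom}_{D_m}(z_i,z_j)\cong\begin{cases} k[t_{n-2}] & j=i,\\ k[t_{n-2}] & j=i+1,\ 1\le i\le m-1,\\ k[t_{n-2}][n-m] & i=m,\ j=1,\\ 0 & \text{otherwise},\end{cases}\] where $k[t_{n-2}]$ denotes the polynomial ring on a generator of degree $n-2$ (as a graded $k$-module) and $[s]$ shifts degrees up by $s$.
   Context: $D_m$ is the $k$-linear dg-category with objects $z_1,\dots,z_m$ whose morphisms are freely generated (as a graded $k$-linear category) by morphisms $b_{i,j}:z_i\to z_j$ for all $i\neq j$, of degree $j-i-1$ if $j>i$ and of degree $n+j-i-1$ if $j<i$, with differential determined on generators by \[ d(b_{i,j})=\begin{cases} \sum_{i<k<j}(-1)^{j-k+1}b_{k,j}b_{i,k} & j>i,\\ \sum_{i<k\le m}(-1)^{j-k+n+1}b_{k,j}b_{i,k}+\sum_{1\le k<j}(-1)^{j-k+1}b_{k,j}b_{i,k} & j<i,\end{cases}\] where $b_{k,j}b_{i,k}$ denotes the composite $z_i\to z_k\to z_j$. Homological grading is used. *)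

From HB Require Import structures.
From mathcomp Require Import all_boot all_order all_algebra.
Set Implicit Arguments. Unset Strict Implicit. Unset Printing Implicit Defensive.
Import Order.TTheory GRing.Theory Num.Theory.
Local Open Scope ring_scope.

(* The dg-category D_m (parameters n, m; objects z_1..z_m, encoded by  *)
(* natural numbers 1..m).                                              *)
(* A basis element of Hom(z_i, z_j) (a word in the generators b_{a,b}) *)
(* is encoded as the list of visited objects [:: i; v_1; ...; j]: the  *)
(* list [:: v_0; v_1; ...; v_l] stands for the composite               *)
(*   b_{v_{l-1},v_l} ... b_{v_1,v_2} b_{v_0,v_1},                      *)
(* and [:: i] stands for the identity of z_i.                          *)

Definition edge_deg (n a b : nat) : int :=
  if (a < b)%N then b%:Z - a%:Z - 1 else n%:Z + b%:Z - a%:Z - 1.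

Fixpoint path_deg (n : nat) (p : seq nat) : int :=
  match p with
  | a :: ((b :: _) as s) => edge_deg n a b + path_deg n s
  | _ => 0
  end.

Definition valid_path (m : nat) (p : seq nat) : bool :=
  all (fun v => (0 < v <= m)%N) p &&
  (if p is x :: s then path (fun a b => a != b) x s else false).

(* basis words of Hom^{d}_{D_m}(z_i, z_j) (homological degree d) *)
Definition hom_word (n m i j : nat) (d : int) (p : seq nat) : Prop :=
  [/\ valid_path m p, head 0%N p = i, last 0%N p = j & path_deg n p = d].

Definition sgn (k : pzRingType) (z : int) : k := (-1) ^+ `|z|%N.

(* coefficient of b_{c,b} b_{a,c} in d(b_{a,b}) *)
Definition dcoef (k : pzRingType) (n m a c b : nat) : k :=
  if (a < b)%N then
    (if (a < c < b)%N then sgn k (b%:Z - c%:Z + 1) else 0)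
  else if (b < a)%N then
    (if (a < c <= m)%N then sgn k (b%:Z - c%:Z + n%:Z + 1)
     else if (1 <= c < b)%N then sgn k (b%:Z - c%:Z + 1) else 0)
  else 0.

(* Elements of the free k-module on words: functions  seq nat -> k,     *)
(* required (below) to be finitely supported.                           *)
Definition chain (k : pzRingType) := seq nat -> k.

(* The differential, extended from the generators by the graded Leibniz *)
(* rule d(f g) = d(f) g + (-1)^{|f|} f d(g) (g applied first).          *)
(* Coefficient of the word q in d(f): sum over the interior positions t *)
(* of q, where the word q arises from the word q' = q without v_t by    *)
(* replacing b_{v_{t-1},v_{t+1}} with b_{v_t,v_{t+1}} b_{v_{t-1},v_t};  *)
(* the Koszul sign is (-1)^(degree of the part of q after v_{t+1}).     *)
Definition dchain (k : pzRingType) (n m : nat) (f : chain k) : chain k :=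
  fun q => \sum_(1 <= t < (size q).-1)
     (dcoef k n m (nth 0%N q t.-1) (nth 0%N q t) (nth 0%N q t.+1)
      * sgn k (path_deg n (drop t.+1 q)))
     * f (take t q ++ drop t.+1 q).

Definition is_chain (k : pzRingType) (n m i j : nat) (d : int) (f : chain k)
  : Prop :=
  (exists s : seq (seq nat), forall p, f p != 0 -> p \in s) /\
  (forall p, f p != 0 -> hom_word n m i j d p).

Definition is_cycle (k : pzRingType) (n m i j : nat) (d : int) (f : chain k)
  : Prop := is_chain n m i j d f /\ forall q, dchain n m f q = 0.

Definition is_boundary (k : pzRingType) (n m i j : nat) (d : int) (f : chain k)
  : Prop := exists g : chain k, is_chain n m i j (d + 1) g /\
                                forall q, f q = dchain n m g q.

(* H_d Hom_{D_m}(z_i, z_j) = Z_d / B_d is isomorphic, as a k-module, to  *)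
(* the free module k^r: there is a k-linear map from the cycles Z_d onto *)
(* k^r whose kernel is exactly the boundaries B_d.                      *)
Definition homology_iso_free (k : comPzRingType) (n m i j : nat) (d : int)
  (r : nat) : Prop :=
  exists phi : chain k -> 'rV[k]_r,
    [/\ forall (a : k) (x y : chain k),
          is_cycle n m i j d x -> is_cycle n m i j d y ->
          phi (fun p => a * x p + y p) = a *: phi x + phi y,
        forall v : 'rV[k]_r, exists x, is_cycle n m i j d x /\ phi x = v
      & forall x, is_cycle n m i j d x ->
          (phi x = 0 <-> is_boundary n m i j d x)].

(* The graded k-module k[t_e] (t of degree e) shifted by s: its degree-d *)
(* component is free of rank 1 (spanned by t^((d-s)/e)) if d - s >= 0    *)
(* and e divides d - s, and is 0 otherwise.                             *)
Definition poly_shift_rank (e : nat) (s : int) (d : int) : nat :=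
  if (0 <= d - s) && (e%:Z %| (d - s))%Z then 1%N else 0%N.

(* The right-hand side of the theorem, as the rank of its degree-d part *)
Definition expected_rank (n m i j : nat) (d : int) : nat :=
  if j == i then poly_shift_rank (n - 2) 0 d
  else if (j == i.+1) && (1 <= i <= m - 1)%N then poly_shift_rank (n - 2) 0 d
  else if (i == m) && (j == 1%N) then poly_shift_rank (n - 2) (n%:Z - m%:Z) d
  else 0%N.

From HB Require Import structures.
From mathcomp Require Import all_boot all_order all_algebra.
From mathcomp Require Import zify ring.
Import Order.TTheory GRing.Theory Num.Theory.
Local Open Scope ring_scope.

(* Homology of the morphism complexes of D_m, by a contracting homotopy.    *)
(* A chain x : seq nat -> k assigns a coefficient to every word (list of     *)
(* visited objects), and the differential d reads x on the words obtained    *)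
(* by deleting an interior letter.  Write nxt a for the cyclic successor of  *)
(* the object a in 1..m; the generator b_{a, nxt a} has degree 0 and is a    *)
(* cycle.  We use four operators on chains:                                  *)
(*   contract x   reads x on a :: nxt a :: w         (the homotopy h),       *)
(*   loop_mul y   multiplies by the loop t = sum_b +-b_{b,a} b_{a,b} of      *)
(*                degree n-2 at the start of the word,                       *)
(*   strip_loop x reads x on a :: nxt a :: a :: w    (divides by that loop), *)
(*   base_part x  keeps only the words [a] and [a; nxt a].                   *)
(* The key identity (homotopy_formula) is                                    *)
(*   x = d(contract x) + contract(d x) + base_part x + loop_mul(strip_loop x)*)
(* and strip_loop, loop_mul commute with d.  By induction on word length,    *)
(* a cycle vanishing on the critical words (i, nxt i)^r w0, w0 = [i] or      *)
(* [i; nxt i], is a boundary; boundaries vanish on critical words; and       *)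
(* loop_mul^r (w0) is a cycle equal to 1 on the r-th critical word.  Hence   *)
(* evaluation at the critical word of degree d is an isomorphism H_d = k,    *)
(* and H_d = 0 when no critical word has degree d.  A degree count matches   *)
(* the critical degrees with the ranks in expected_rank.                     *)

Section MorphismComplex.
Set Implicit Arguments. Unset Strict Implicit. Unset Printing Implicit Defensive.
Variable k : comPzRingType.
Variables n m : nat.
(* The standing assumptions of the theorem; n - 2 > 0 is the degree of the *)
(* loop element, and m >= 3 makes nxt a differ from a.                    *)
Hypothesis n_ge3 : (3 <= n)%N.
Hypothesis m_ge3 : (3 <= m)%N.

Lemma sgnE (z : int) : sgn k z = (-1) ^+ (odd `|z|%N).
Proof. by rewrite /sgn signr_odd. Qed.

Lemma sgnD (a b : int) : sgn k (a + b) = sgn k a * sgn k b.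
Proof. rewrite !sgnE -signr_addb; congr (_ ^+ _); lia. Qed.

Lemma sgn0 : sgn k 0 = 1.
Proof. by rewrite /sgn expr0. Qed.

Lemma sgn_odd_eq (a b : int) : odd `|a|%N = odd `|b|%N -> sgn k a = sgn k b.
Proof. by rewrite !sgnE => ->. Qed.

Lemma sgn_odd_opp (a b : int) : odd `|a|%N = ~~ odd `|b|%N -> sgn k a = - sgn k b.
Proof. by rewrite !sgnE => ->; case: (odd _); rewrite /= ?opprK ?expr1 ?expr0. Qed.

Lemma sgn_odd_add0 (a b : int) : odd `|a|%N = ~~ odd `|b|%N -> sgn k a + sgn k b = 0.
Proof. by move/sgn_odd_opp ->; rewrite addNr. Qed.

Lemma sgn_mulss z : sgn k z * sgn k z = 1.
Proof. by rewrite -sgnD -sgn0; apply: sgn_odd_eq; lia. Qed.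

Definition obj (v : nat) : bool := (0 < v <= m)%N.
Definition nxt (a : nat) : nat := if a == m then 1%N else a.+1.
Definition loop_sgn (a b : nat) : k :=
  sgn k (edge_deg n (nxt a) a + edge_deg n b a).

Lemma obj_le a : obj a -> (a <= m)%N.
Proof. by rewrite /obj; lia. Qed.

Lemma obj_nxt a : obj a -> obj (nxt a).
Proof. by rewrite /obj /nxt => Ha; case: ifP => H; lia. Qed.

Lemma nxt_neq a : obj a -> nxt a != a.
Proof. by rewrite /obj /nxt => Ha; case: ifP => H; lia. Qed.

Lemma nxt_le a : (a <= m)%N -> (nxt a <= m)%N.
Proof. by rewrite /nxt => Ha; case: ifP => H; lia. Qed.

Lemma loop_sgn_nxt a : obj a -> loop_sgn a (nxt a) = 1.
Proof. by move=> Ha; rewrite /loop_sgn -sgn0; apply: sgn_odd_eq; lia. Qed.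

Ltac unfold_coef := rewrite /dcoef /loop_sgn /nxt /edge_deg /obj.
Ltac case_ifs := repeat (let H := fresh "H" in case: ifP => H); try lia; try done.
Ltac solve_sgn := rewrite ?mulr0 ?mul0r ?addr0 ?add0r -?sgnD;
  first [ by apply: sgn_odd_eq; lia | by apply: sgn_odd_add0; lia | by [] ].

Lemma edge_deg_loop a b : a != b -> edge_deg n a b + edge_deg n b a = n%:Z - 2.
Proof. by rewrite /edge_deg => H; case_ifs. Qed.

(* d is homogeneous of degree -1 on generators. *)
Lemma dcoef_deg a c b : dcoef k n m a c b = 0 \/
  edge_deg n a b = edge_deg n a c + edge_deg n c b + 1.
Proof. by unfold_coef; case_ifs; try (by left); right; lia. Qed.

Lemma dcoef_nxt_mid a b : obj a -> obj b -> b != a -> b != nxt a ->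
  dcoef k n m a (nxt a) b = sgn k (edge_deg n (nxt a) b).
Proof. unfold_coef => Ha Hb Hba Hbs; case Ea: (a == m); move: Hbs; case_ifs => _; solve_sgn. Qed.

Lemma edge_deg_nxt_mid a b : obj a -> obj b -> b != a -> b != nxt a ->
  edge_deg n a b = edge_deg n a (nxt a) + edge_deg n (nxt a) b + 1.
Proof. unfold_coef => Ha Hb Hba Hbs; case Ea: (a == m); move: Hbs; case_ifs. Qed.

Lemma dcoef_nxt_loop a b : obj a -> obj b -> b != a -> b != nxt a ->
  dcoef k n m (nxt a) b a = sgn k (edge_deg n b a).
Proof. unfold_coef => Ha Hb Hba Hbs; case Ea: (a == m); move: Hbs; case_ifs => _; solve_sgn. Qed.

Lemma edge_deg_nxt_loop a b : obj a -> obj b -> b != a -> b != nxt a ->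
  edge_deg n (nxt a) a = edge_deg n (nxt a) b + edge_deg n b a + 1.
Proof. unfold_coef => Ha Hb Hba Hbs; case Ea: (a == m); move: Hbs; case_ifs. Qed.

Lemma dcoef_nxt_src a b c : obj a -> obj b -> obj c -> b != a -> b != nxt a ->
  c != a -> c != nxt a -> dcoef k n m a b c = dcoef k n m (nxt a) b c.
Proof.
unfold_coef => Ha Hb Hc Hba Hbs Hca Hcs.
by case Ea: (a == m); move: Hbs Hcs; case_ifs => _ _; solve_sgn.
Qed.

Lemma dcoef_nxt_a a b : obj a -> obj b -> dcoef k n m (nxt a) a b = 0.
Proof. by unfold_coef => Ha Hb; case Ea: (a == m); case_ifs. Qed.

Lemma dcoef_src_mid a c : dcoef k n m a a c = 0.
Proof. by unfold_coef; case_ifs. Qed.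
Lemma dcoef_loop a c : dcoef k n m a c a = 0.
Proof. by unfold_coef; case_ifs. Qed.
Lemma dcoef_mid_tgt a b : dcoef k n m a b b = 0.
Proof. by unfold_coef; case_ifs. Qed.

(* The two ways a -> b -> c -> a arises in d of a loop cancel: the loop     *)
(* element t is a cycle.                                                    *)
Lemma dcoef_loop_cancel a b c : obj a -> obj b -> obj c -> b != a -> c != a ->
  dcoef k n m a b c * sgn k (edge_deg n c a) * loop_sgn a c
  + dcoef k n m b c a * loop_sgn a b = 0.
Proof. by unfold_coef => Ha Hb Hc Hba Hca; case Ea: (a == m); case_ifs; solve_sgn. Qed.

(* b_{i, nxt i} is a cycle. *)
Lemma dcoef_to_nxt i c : obj i -> dcoef k n m i c (nxt i) = 0.
Proof. by unfold_coef => Hi; case Ea: (i == m); case_ifs. Qed.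

Lemma dcoef_not_obj a b c : ~~ obj b -> (a <= m)%N -> (c <= m)%N -> dcoef k n m a b c = 0.
Proof. by unfold_coef => Hb Ha Hc; case_ifs. Qed.

Lemma valid1 a : valid_path m [:: a] = obj a.
Proof. by rewrite /valid_path /obj /= !andbT. Qed.

Lemma valid_cons2 a b t : valid_path m (a :: b :: t) = [&& obj a, a != b & valid_path m (b :: t)].
Proof.
rewrite /valid_path /obj /=.
by case: (0 < a <= m)%N; case: (a != b); case: (0 < b <= m)%N; case: (all _ t); rewrite /= ?andbF.
Qed.

Lemma valid_head a t : valid_path m (a :: t) -> obj a.
Proof. by case: t => [|b t]; rewrite ?valid1 ?valid_cons2 // => /andP[]. Qed.

Definition supp_valid (x : chain k) : Prop := forall p, x p != 0 -> valid_path m p.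

Lemma supp_valid0 (x : chain k) p : supp_valid x -> ~~ valid_path m p -> x p = 0.
Proof. move=> H Hp; have [//|/H] := eqVneq (x p) 0; by rewrite (negbTE Hp). Qed.

Lemma path_deg_cons2 a b t : path_deg n (a :: b :: t) = edge_deg n a b + path_deg n (b :: t).
Proof. by []. Qed.

Lemma path_deg1 a : path_deg n [:: a] = 0.
Proof. by []. Qed.

(* The term of d f at a :: q that deletes the letter following a; all other *)
Definition head_term (f : chain k) (a : nat) (q : seq nat) : k :=
  match q with
  | b :: c :: r => dcoef k n m a b c * sgn k (path_deg n (c :: r)) * f (a :: c :: r)
  | _ => 0
  end.

Lemma dchain_cons (f : chain k) a q :
  dchain n m f (a :: q) = head_term f a q + dchain n m (fun p => f (a :: p)) q.
Proof.
rewrite /dchain /=.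
case: q => [|b [|c r]] /=.
- by rewrite !big_geq // add0r.
- by rewrite !big_geq // add0r.
rewrite big_nat_recl //; congr (_ + _).
apply: eq_big_nat => t /andP [t1 _].
by case: t t1.
Qed.

Lemma dchain_ext (f g : chain k) q : (forall p, f p = g p) -> dchain n m f q = dchain n m g q.
Proof. by move=> H; rewrite /dchain; apply: eq_bigr => t _; rewrite H. Qed.

Lemma dchain_head_ext (f g : chain k) a q :
  (forall p, f (a :: p) = g (a :: p)) -> dchain n m f (a :: q) = dchain n m g (a :: q).
Proof.
move=> H; rewrite !dchain_cons; congr (_ + _).
  by case: q => [|b [|c r]] //=; rewrite H.
by apply: dchain_ext.
Qed.

Lemma dchain0 q : dchain n m (fun _ => 0 : k) q = 0.
Proof. by rewrite /dchain big1 // => t _; rewrite mulr0. Qed.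

Lemma dchainD (f g : chain k) q :
  dchain n m (fun p => f p + g p) q = dchain n m f q + dchain n m g q.
Proof. by rewrite /dchain -big_split; apply: eq_bigr => t _; rewrite mulrDr. Qed.

Lemma dchainZ (c : k) (f : chain k) q :
  dchain n m (fun p => c * f p) q = c * dchain n m f q.
Proof. by rewrite /dchain mulr_sumr; apply: eq_bigr => t _; rewrite mulrCA. Qed.

Lemma dchain_small (f : chain k) q : (size q <= 2)%N -> dchain n m f q = 0.
Proof. by move=> H; rewrite /dchain big_geq //; lia. Qed.

Lemma dchain_eq0_shorter (f : chain k) q : (forall p, size p = (size q).-1 -> f p = 0) ->
  dchain n m f q = 0.
Proof.
move=> H; rewrite /dchain big1_seq // => t; rewrite mem_index_iota => /andP [_ lt].
rewrite H ?mulr0 // size_cat size_take size_drop.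
have -> : (t < size q)%N by lia.
lia.
Qed.

Lemma dchain_sgn_head q : forall b u (F : chain k),
  dchain n m (fun p => sgn k (path_deg n (u :: p)) * F p) (b :: q) =
  - sgn k (path_deg n (u :: b :: q)) * dchain n m F (b :: q).
Proof.
elim: q => [|c q IH] b u F.
  by rewrite /dchain !big_geq // mulr0.
rewrite [LHS]dchain_cons [in RHS]dchain_cons mulrDr; congr (_ + _).
  case: q {IH} => [|d r] /=; first by rewrite mulr0.
  case: (dcoef_deg b c d) => [->|E]; first by rewrite !mul0r mulr0.
  rewrite E.
  have -> : sgn k (edge_deg n u b + (edge_deg n b c + edge_deg n c d + 1 + path_deg n (d :: r)))
     = - sgn k (edge_deg n u b + (edge_deg n b c + (edge_deg n c d + path_deg n (d :: r)))).
    by apply: sgn_odd_opp; lia.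
  ring.
have -> : dchain n m (fun p => sgn k (path_deg n (u :: b :: p)) * F (b :: p)) (c :: q)
  = sgn k (edge_deg n u b) *
    dchain n m (fun p => sgn k (path_deg n (b :: p)) * F (b :: p)) (c :: q).
  rewrite -dchainZ; apply: dchain_ext => p; rewrite path_deg_cons2 sgnD; ring.
rewrite IH (path_deg_cons2 u b) sgnD; ring.
Qed.

Arguments path_deg : simpl never.
Arguments edge_deg : simpl never.
Arguments dcoef : simpl never.
Arguments sgn : simpl never.

(* The homotopy: on a :: b :: t with b <> a, nxt a it reads x on          *)
(* a :: nxt a :: b :: t, with the sign that makes d h + h d the identity.   *)
Definition contract (x : chain k) : chain k := fun q =>
  match q with
  | a :: b :: t => if (b == nxt a) || (b == a) then 0
                   else sgn k (path_deg n (nxt a :: b :: t)) * x (a :: nxt a :: b :: t)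
  | _ => 0 end.
(* Multiplication by the loop element t in front of a word: its value on   *)
Definition loop_mul (y : chain k) : chain k := fun q =>
  match q with
  | a :: b :: c :: t => if [&& c == a, b != a & obj b] then loop_sgn a b * y (c :: t) else 0
  | _ => 0 end.
Definition base_part (x : chain k) : chain k := fun q =>
  match q with
  | [:: a] => x q
  | [:: a; b] => if b == nxt a then x q else 0
  | _ => 0 end.
Definition strip_loop (x : chain k) : chain k := fun w =>
  match w with a :: _ => x (a :: nxt a :: w) | [::] => 0 end.

Lemma head_term_eq (f : chain k) a b c r :
  head_term f a (b :: c :: r) = dcoef k n m a b c * sgn k (path_deg n (c :: r)) * f (a :: c :: r).
Proof. by []. Qed.
Lemma contract_eq x a b t : contract x (a :: b :: t) = if (b == nxt a) || (b == a) then 0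
                   else sgn k (path_deg n (nxt a :: b :: t)) * x (a :: nxt a :: b :: t).
Proof. by []. Qed.
Lemma contractF x a b t : ~~ ((b == nxt a) || (b == a)) -> contract x (a :: b :: t) =
  sgn k (path_deg n (nxt a :: b :: t)) * x (a :: nxt a :: b :: t).
Proof. by rewrite contract_eq => /negbTE ->. Qed.
Lemma loop_mul_eq y a b c t : loop_mul y (a :: b :: c :: t) =
  if [&& c == a, b != a & obj b] then loop_sgn a b * y (c :: t) else 0.
Proof. by []. Qed.

Lemma base_part3 x a b c t : base_part x (a :: b :: c :: t) = 0.
Proof. by []. Qed.

(* Deleting nxt a from a :: nxt a :: b :: t undoes the sign of contract. *)
Lemma contract_sgn a b t : obj a -> obj b -> b != a -> b != nxt a ->
  sgn k (path_deg n [:: nxt a, b & t])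
  * (dcoef k n m a (nxt a) b * sgn k (path_deg n (b :: t))) = 1.
Proof.
move=> ra rb ba bn; rewrite dcoef_nxt_mid // path_deg_cons2 sgnD.
by rewrite mulrACA !sgn_mulss mulr1.
Qed.

(* Homotopy formula on words of length at most 2: only base_part and, on  *)
(* [a; b] with b <> nxt a, the term contract (d x) survive.               *)
Lemma homotopy_formula_short x q : supp_valid x -> (size q <= 2)%N ->
  x q = dchain n m (contract x) q + contract (dchain n m x) q
        + base_part x q + loop_mul (strip_loop x) q.
Proof.
move=> Hx; case: q => [|a [|b [|c t]]] // _.
- by rewrite dchain_small // (supp_valid0 Hx) // /= !addr0.
- by rewrite dchain_small // /= !addr0 add0r.
rewrite dchain_small // contract_eq /= addr0 add0r.
case: ifP => [/orP[/eqP->|/eqP->]|/norP[Hb1 Hb2]].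
- by rewrite eqxx add0r.
- rewrite add0r; case: ifP => _ //; apply: supp_valid0 => //.
  by rewrite valid_cons2 eqxx andbF.
rewrite (negbTE Hb1) addr0 dchain_cons head_term_eq dchain_small // !addr0.
have [->|xn] := eqVneq (x [:: a; b]) 0; first by rewrite !mulr0.
move: (Hx _ xn); rewrite valid_cons2 valid1 => /and3P[ra _ rb].
by rewrite mulrA contract_sgn // mul1r.
Qed.

(* Homotopy formula on a :: b :: c :: t when b is nxt a or a: contract    *)
(* vanishes there, and d (contract x) or loop_mul recovers x.             *)
Lemma homotopy_formula_degenerate x a b c t : supp_valid x ->
  (b == nxt a) || (b == a) ->
  x [:: a, b, c & t] = dchain n m (contract x) [:: a, b, c & t]
    + contract (dchain n m x) [:: a, b, c & t]
    + base_part x [:: a, b, c & t] + loop_mul (strip_loop x) [:: a, b, c & t].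
Proof.
move=> Hx Hb; rewrite dchain_cons head_term_eq.
rewrite (@dchain_head_ext _ (fun _ => 0)); last by move=> p; rewrite /= ?contract_eq Hb.
rewrite dchain0 (contract_eq (dchain n m x)) Hb base_part3 !addr0 loop_mul_eq.
case/orP: Hb => /eqP Hb; subst b; last first.
  rewrite dcoef_src_mid !mul0r add0r eqxx /= andbF; apply: supp_valid0 => //.
  by rewrite valid_cons2 eqxx andbF.
have [xq|xq] := eqVneq (x [:: a, nxt a, c & t]) 0.
  rewrite xq contract_eq; case: ifP => _; rewrite ?xq ?mulr0 ?add0r;
  by case: ifP => [/andP[/eqP ca _]|_] //; subst c; rewrite /strip_loop xq mulr0.
move: (Hx _ xq); rewrite !valid_cons2 => /and3P[ra _ /and3P[rn nc vc]].
have [ca|ca] := eqVneq c a.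
  subst c; rewrite contract_eq eqxx orbT mulr0 add0r nxt_neq // rn /=.
  by rewrite loop_sgn_nxt // mul1r.
have cn : c != nxt a by rewrite eq_sym.
rewrite contract_eq (negbTE ca) (negbTE cn) /= addr0.
by rewrite mulrCA mulrA contract_sgn ?(valid_head vc) // mul1r.
Qed.

(* For a word a :: b :: a :: t, the term of d (contract x) deleting b      *)
(* cancels against loop_mul (strip_loop x).                               *)
Lemma loop_term_cancel a b t (y : k) : obj a -> b != nxt a -> b != a ->
  sgn k (path_deg n [:: nxt a, b, a & t])
    * (dcoef k n m (nxt a) b a * sgn k (path_deg n (a :: t)) * y)
  + (if obj b then loop_sgn a b * y else 0) = 0.
Proof.
move=> ra Hb1 Hb2; case: (boolP (obj b)) => rb; last first.
  by rewrite dcoef_not_obj ?nxt_le ?obj_le // !mul0r mulr0 addr0.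
rewrite dcoef_nxt_loop // /loop_sgn (edge_deg_nxt_loop ra rb Hb2 Hb1) !path_deg_cons2.
set e1 := edge_deg n (nxt a) b; set e2 := edge_deg n b a; set d0 := path_deg n (a :: t).
transitivity ((sgn k (e1 + (e2 + d0)) * (sgn k e2 * sgn k d0)
               + sgn k (e1 + e2 + 1 + e2)) * y); first by ring.
by rewrite -!sgnD sgn_odd_add0 ?mul0r //; lia.
Qed.

(* For a word a :: b :: c :: t with c <> a, the term of d (contract x)     *)
(* deleting b cancels against the term of contract (d x) deleting b from   *)
(* a :: nxt a :: b :: c :: t.                                             *)
Lemma shift_term_cancel a b c t (y : k) : obj a -> obj c ->
  b != nxt a -> b != a -> c != nxt a -> c != a ->
  dcoef k n m a b c * sgn k (path_deg n (c :: t))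
    * (sgn k (path_deg n [:: nxt a, c & t]) * y)
  + sgn k (path_deg n [:: nxt a, b, c & t])
    * (dcoef k n m (nxt a) b c * sgn k (path_deg n (c :: t)) * y) = 0.
Proof.
move=> ra rc Hb1 Hb2 cn ca; case: (boolP (obj b)) => rb; last first.
  have [am cm] := (obj_le ra, obj_le rc).
  by rewrite !dcoef_not_obj ?nxt_le // !mul0r mulr0 addr0.
rewrite (dcoef_nxt_src ra rb rc Hb2 Hb1 ca cn).
case: (dcoef_deg (nxt a) b c) => [->|E]; first by rewrite !mul0r mulr0 addr0.
rewrite !path_deg_cons2 E.
set e1 := edge_deg n (nxt a) b; set e2 := edge_deg n b c; set d0 := path_deg n (c :: t).
set dd := dcoef k n m (nxt a) b c.
transitivity (dd * y * (sgn k d0 * sgn k (e1 + e2 + 1 + d0)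
                        + sgn k (e1 + (e2 + d0)) * sgn k d0)); first by ring.
by rewrite -!sgnD sgn_odd_add0 ?mulr0 //; lia.
Qed.

(* The terms of the homotopy formula on a :: b :: c :: t (b <> nxt a, a)   *)
(* that do not come from deleting the second letter cancel.               *)
Lemma homotopy_generic_cancel x a b c t : supp_valid x -> b != nxt a -> b != a ->
  dcoef k n m a b c * sgn k (path_deg n (c :: t)) * contract x [:: a, c & t]
  + sgn k (path_deg n [:: nxt a, b, c & t])
    * (dcoef k n m (nxt a) b c * sgn k (path_deg n (c :: t)) * x [:: a, nxt a, c & t])
  + loop_mul (strip_loop x) [:: a, b, c & t] = 0.
Proof.
move=> Hx Hb1 Hb2; rewrite loop_mul_eq contract_eq.
set y := x [:: a, nxt a, c & t].
have [y0|yn] := eqVneq y 0.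
  rewrite y0 !mulr0 if_same !mulr0 !add0r.
  by case: ifP => [/andP [/eqP ca _]|//]; subst c; rewrite /strip_loop -/y y0 mulr0.
move: (Hx _ yn); rewrite !valid_cons2 => /and3P[ra _ /and3P[_ nc vc]].
have [ca|ca] := eqVneq c a.
  subst c; rewrite orbT mulr0 add0r Hb2 /= -/y.
  exact: loop_term_cancel.
have cn : c != nxt a by rewrite eq_sym.
rewrite (negbTE cn) /= addr0.
exact: shift_term_cancel (valid_head vc) Hb1 Hb2 cn ca.
Qed.

Lemma homotopy_formula_generic x a b c t : supp_valid x -> b != nxt a -> b != a ->
  x [:: a, b, c & t] = dchain n m (contract x) [:: a, b, c & t]
    + contract (dchain n m x) [:: a, b, c & t]
    + base_part x [:: a, b, c & t] + loop_mul (strip_loop x) [:: a, b, c & t].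
Proof.
move=> Hx Hb1 Hb2; have Hb : ~~ ((b == nxt a) || (b == a)) by apply/norP.
rewrite dchain_cons head_term_eq.
rewrite (@dchain_head_ext _ (fun p => sgn k (path_deg n (nxt a :: p)) * x (a :: nxt a :: p)));
  last by move=> p; rewrite /= ?contract_eq (negbTE Hb1) (negbTE Hb2).
rewrite dchain_sgn_head (contractF (dchain n m x) _ Hb).
rewrite [dchain n m x _]dchain_cons head_term_eq.
rewrite [dchain n m (fun p => x (a :: p)) _]dchain_cons head_term_eq base_part3 addr0.
set S := sgn k (path_deg n [:: nxt a, b, c & t]).
set X := x [:: a, b, c & t].
have HX : S * (dcoef k n m a (nxt a) b * sgn k (path_deg n [:: b, c & t])) * X = X.
  have [->|xn] := eqVneq X 0; first by rewrite mulr0.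
  move: (Hx _ xn); rewrite valid_cons2 => /and3P[ra _ vb].
  by rewrite contract_sgn ?(valid_head vb) // mul1r.
have HY := homotopy_generic_cancel c t Hx Hb1 Hb2.
rewrite -/S in HY.
set D := dchain n m (fun p => x [:: a, nxt a & p]) [:: b, c & t].
rewrite -[LHS]HX -[LHS]add0r -[in LHS]HY; ring.
Qed.

Lemma homotopy_formula x q : supp_valid x ->
  x q = dchain n m (contract x) q + contract (dchain n m x) q
        + base_part x q + loop_mul (strip_loop x) q.
Proof.
move=> Hx; case: q => [|a [|b [|c t]]]; try exact: homotopy_formula_short.
have [Hb|/norP[Hb1 Hb2]] := boolP ((b == nxt a) || (b == a)).
  exact: homotopy_formula_degenerate.
exact: homotopy_formula_generic.
Qed.

(* strip_loop is a chain map: deleting nxt a or the second a from          *)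
(* a :: nxt a :: a :: w gives a repeated letter or a zero coefficient.     *)
Lemma strip_loop_dchain x w : supp_valid x ->
  strip_loop (dchain n m x) w = dchain n m (strip_loop x) w.
Proof.
case: w => [|a w] Hx; first by rewrite dchain_small.
rewrite [RHS](@dchain_head_ext _ (fun p => x [:: a, nxt a & p])) //.
rewrite [LHS]/strip_loop [LHS]dchain_cons head_term_eq dcoef_loop !mul0r add0r [LHS]dchain_cons.
case: w => [|c r]; first by rewrite add0r.
rewrite head_term_eq.
have [x0|xn] := eqVneq (x [:: a, nxt a, c & r]) 0; first by rewrite x0 mulr0 add0r.
move: (Hx _ xn); rewrite !valid_cons2 => /and3P[ra _ /and3P[_ _ vc]].
by rewrite dcoef_nxt_a // ?(valid_head vc) // !mul0r add0r.
Qed.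

(* loop_mul commutes with d on words a :: b :: a :: t starting with a loop: *)
(* the deletions inside t match, and deleting the loop's middle or the     *)
(* letter after it gives words with a repeated letter.                     *)
Lemma loop_mul_dchain_loop y a b t : b != a -> obj b ->
  loop_mul (dchain n m y) [:: a, b, a & t] = dchain n m (loop_mul y) [:: a, b, a & t].
Proof.
move=> ba rb; have C : [&& a == a, b != a & obj b] by rewrite eqxx ba rb.
rewrite loop_mul_eq C [RHS]dchain_cons head_term_eq [dchain _ _ _ [:: b, a & t]]dchain_cons.
rewrite [X in _ = _ + (_ + X)](@dchain_head_ext _ (fun p => loop_sgn a b * y p)); last by move=> p; rewrite /= C.
rewrite dchainZ; case: t => [|d r].
  by rewrite /head_term /loop_mul !mulr0 !add0r.
rewrite head_term_eq !loop_mul_eq eqxx (negbTE ba) /= andbF mulr0 add0r.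
have [da|da] := eqVneq d a; last by rewrite /= mulr0 add0r.
by subst d; rewrite dcoef_mid_tgt !mul0r add0r.
Qed.

(* On all other words, loop_mul y vanishes and so does its boundary: the   *)
(* only contributions come from a :: b :: c :: a :: r, and they cancel     *)
(* because the loop element is a cycle.                                    *)
Lemma loop_mul_dchain_other y a b c t : supp_valid y ->
  ~~ [&& c == a, b != a & obj b] ->
  loop_mul (dchain n m y) [:: a, b, c & t] = dchain n m (loop_mul y) [:: a, b, c & t].
Proof.
move=> Hy C; rewrite loop_mul_eq (negbTE C) [RHS]dchain_cons head_term_eq [dchain _ _ _ [:: b, c & t]]dchain_cons.
rewrite [X in _ = _ + (_ + X)](@dchain_head_ext _ (fun p => 0));
  last by move=> p; rewrite /= (negbTE C).
rewrite dchain0 addr0; case: t => [|d r].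
  by rewrite /head_term /loop_mul mulr0 add0r.
rewrite head_term_eq !loop_mul_eq.
have [da|da] := eqVneq d a; last by rewrite !andFb !mulr0 addr0.
subst d; have [y0|yn] := eqVneq (y (a :: r)) 0.
  by rewrite y0 !mulr0 !if_same !mulr0 addr0.
have ra := valid_head (Hy _ yn).
have [ca|ca] := eqVneq c a.
  by subst c; rewrite dcoef_loop dcoef_mid_tgt !mul0r add0r.
have [ba|ba] := eqVneq b a.
  by subst b; rewrite dcoef_src_mid dcoef_loop !mul0r add0r.
rewrite /=; case: (boolP (obj c)) => rc; case: (boolP (obj b)) => rb /=.
- rewrite !path_deg_cons2 sgnD; apply/esym.
  transitivity (sgn k (path_deg n (a :: r)) * y (a :: r) *
    (dcoef k n m a b c * sgn k (edge_deg n c a) * loop_sgn a c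
     + dcoef k n m b c a * loop_sgn a b)); first by ring.
  by rewrite dcoef_loop_cancel // mulr0.
- by rewrite dcoef_not_obj // ?obj_le // !mul0r mulr0 addr0.
- by rewrite (@dcoef_not_obj b c a) // ?obj_le // !mul0r mulr0 addr0.
- by rewrite !mulr0 addr0.
Qed.

Lemma loop_mul_dchain y q : supp_valid y ->
  loop_mul (dchain n m y) q = dchain n m (loop_mul y) q.
Proof.
move=> Hy; case: q => [|a [|b [|c t]]]; try by rewrite dchain_small.
have [/and3P[/eqP -> ba rb]|C] := boolP [&& c == a, b != a & obj b].
  exact: loop_mul_dchain_loop.
exact: loop_mul_dchain_other.
Qed.

Lemma contract0 (f : chain k) q : (forall p, f p = 0) -> contract f q = 0.
Proof. by move=> H; case: q => [|a [|b t]] //; rewrite contract_eq H mulr0 if_same. Qed.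

Lemma loop_mul_ext (f g : chain k) q : (forall p, f p = g p) -> loop_mul f q = loop_mul g q.
Proof. by move=> H; case: q => [|a [|b [|c t]]] //; rewrite !loop_mul_eq H. Qed.

Lemma loop_mul0 (f : chain k) q : (forall p, f p = 0) -> loop_mul f q = 0.
Proof. by move=> H; case: q => [|a [|b [|c t]]] //; rewrite loop_mul_eq H mulr0 if_same. Qed.

Lemma neq0_mulr (u v : k) : u * v != 0 -> v != 0.
Proof. by apply: contraNneq => ->; rewrite mulr0. Qed.

Section FixedEnds.
Variables i j : nat.
Hypothesis obj_i : obj i.
Hypothesis obj_j : obj j.

Lemma chain_supp_valid d x : is_chain n m i j d x -> supp_valid x.
Proof. by case=> _ H p /H []. Qed.

Lemma contract_chain d x : is_chain n m i j d x -> is_chain n m i j (d + 1) (contract x).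
Proof.
case=> [[s Hs] Hw]; split.
  exists [seq (match p with a :: _ :: t => a :: t | _ => p end) | p <- s].
  move=> [|a [|b t]] /=; rewrite ?eqxx //; case: ifP => _; rewrite ?eqxx // => /neq0_mulr /Hs H.
  by apply/mapP; exists [:: a, nxt a, b & t].
move=> [|a [|b t]] /=; rewrite ?eqxx //; case: ifP => [_|/norP [Hb1 Hb2]]; rewrite ?eqxx //.
move=> /neq0_mulr /Hw [V Hh Hl Hd].
move: V; rewrite !valid_cons2 => /and3P [ra _ /and3P [_ _ vb]].
have rb := valid_head vb.
split => //.
- by rewrite valid_cons2 ra eq_sym Hb2.
- rewrite -Hd !path_deg_cons2 (edge_deg_nxt_mid ra rb Hb2 Hb1); ring.
Qed.

Lemma loop_mul_chain d y : is_chain n m i j d y -> is_chain n m i j (d + (n%:Z - 2)) (loop_mul y).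
Proof.
case=> [[s Hs] Hw]; split.
  exists [seq (head 0%N p :: b :: p) | p <- s, b <- iota 1 m].
  move=> [|a [|b [|c t]]] /=; rewrite ?eqxx //; case: ifP => [/and3P [/eqP ca ba rb]|]; rewrite ?eqxx //.
  move=> /neq0_mulr /Hs H; subst c.
  have Hb : b \in iota 1 m by rewrite mem_iota; move: rb; rewrite /obj; lia.
  exact: (allpairs_f (fun p b => [:: head 0%N p, b & p]) H Hb).
move=> [|a [|b [|c t]]] /=; rewrite ?eqxx //; case: ifP => [/and3P [/eqP ca ba rb]|]; rewrite ?eqxx //.
subst c; move=> /neq0_mulr /Hw [V Hh Hl Hd].
have ra := valid_head V.
split => //.
- by rewrite !valid_cons2 ra rb V ba eq_sym ba.
rewrite !path_deg_cons2 addrA edge_deg_loop; last by rewrite eq_sym.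
by rewrite Hd addrC.
Qed.

Lemma strip_loop_chain d x : is_chain n m i j d x -> is_chain n m i j (d - (n%:Z - 2)) (strip_loop x).
Proof.
case=> [[s Hs] Hw]; split.
  exists [seq drop 2 p | p <- s].
  move=> [|a w] /=; rewrite ?eqxx // => /Hs H.
  by apply/mapP; exists [:: a, nxt a, a & w].
move=> [|a w] /=; rewrite ?eqxx // => /Hw [V Hh Hl Hd].
move: V; rewrite !valid_cons2 => /and3P [ra _ /and3P [_ _ va]].
split => //.
rewrite -Hd !path_deg_cons2 addrA edge_deg_loop; first by ring.
by rewrite eq_sym nxt_neq.
Qed.

Lemma add_chain d (f g : chain k) : is_chain n m i j d f -> is_chain n m i j d g ->
  is_chain n m i j d (fun p => f p + g p).
Proof.
case=> [[s1 H1] W1] [[s2 H2] W2]; split.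
  exists (s1 ++ s2) => p Hp; rewrite mem_cat.
  have [f0|fn] := eqVneq (f p) 0; last by rewrite H1.
  by rewrite H2 ?orbT //; move: Hp; rewrite f0 add0r.
move=> p Hp; have [f0|fn] := eqVneq (f p) 0; last exact: W1.
by apply: W2; move: Hp; rewrite f0 add0r.
Qed.

Lemma scale_chain d (c : k) (f : chain k) : is_chain n m i j d f ->
  is_chain n m i j d (fun p => c * f p).
Proof.
case=> [[s H1] W1]; split; first by exists s => p /neq0_mulr /H1.
by move=> p /neq0_mulr /W1.
Qed.

Lemma zero_chain d : is_chain n m i j d (fun _ => 0 : k).
Proof. by split; [exists [::] | ]; move=> p; rewrite eqxx. Qed.

Lemma chain_size_bound d (x : chain k) : is_chain n m i j d x ->
  exists N, forall p, x p != 0 -> (size p < N)%N.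
Proof.
case=> [[s Hs] _]; exists (\max_(p <- s) size p).+1 => p /Hs Hp.
by rewrite ltnS; exact: (@leq_bigmax_seq _ s xpredT size p Hp).
Qed.

Definition no_repeat (p : seq nat) := if p is a :: s then path (fun a b => a != b) a s else true.

Lemma valid_no_repeat p : valid_path m p -> no_repeat p.
Proof. by case: p => // a s; rewrite /valid_path => /andP []. Qed.

(* The critical words (i, nxt i)^r followed by [i] (if j = i) or          *)
(* [i; nxt i] (if j = nxt i); critical d r says that the r-th critical    *)
(* word exists and has degree d.                                          *)
Definition base_word := if j == i then [:: i] else [:: i; nxt i].
Fixpoint crit_word r := if r is r'.+1 then i :: nxt i :: crit_word r' else base_word.
Definition base_deg := path_deg n base_word.
Definition critical (d : int) (r : nat) :=
  ((j == i) || (j == nxt i)) && (d == base_deg + r%:Z * (n%:Z - 2)).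

Lemma crit_word_head r : exists t, crit_word r = i :: t.
Proof. by case: r => [|r] /=; [rewrite /base_word; case: ifP => _; eexists | eexists]. Qed.

Lemma crit_word_second r u t : crit_word r = [:: i, u & t] -> u = nxt i.
Proof. by case: r => [|r] /=; [rewrite /base_word; case: ifP => _ [] | case]. Qed.

Lemma critical_uniq d r r0 : critical d r -> critical d r0 -> r = r0.
Proof.
rewrite /critical => /andP [_ /eqP E1] /andP [_ /eqP E2].
have : r%:Z * (n%:Z - 2) = r0%:Z * (n%:Z - 2).
  by apply: (@addrI _ base_deg); rewrite -E1 -E2.
move/(mulIf _) => H.
have : r%:Z = r0%:Z by apply: H; apply/eqP; lia.
by case.
Qed.

(* Boundaries vanish on critical words: deleting a letter from a critical *)
(* word always produces a repeated letter.                                *)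
Lemma dchain_crit_word r : forall g : chain k, (forall p, g p != 0 -> no_repeat p) -> dchain n m g (crit_word r) = 0.
Proof.
elim: r => [|r IH] g Hg.
  by rewrite /= /base_word; case: ifP => _; rewrite dchain_small.
have [t Et] := crit_word_head r.
rewrite /= Et dchain_cons head_term_eq dcoef_loop !mul0r add0r dchain_cons.
have -> : head_term (fun p => g (i :: p)) (nxt i) (i :: t) = 0.
  case: t Et => [|u t] Et //; rewrite head_term_eq.
  rewrite (crit_word_second Et).
  have [g0|gn] := eqVneq (g [:: i, nxt i, nxt i & t]) 0; first by rewrite g0 mulr0.
  by move: (Hg _ gn); rewrite /= eqxx andbF.
rewrite add0r -Et IH // => p Hp.
move: (Hg _ Hp); case: p {Hp} => [|a p] //=.
by case/andP => _ /andP [].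
Qed.

(* The only chains of Hom(z_i, z_j) on words [a] or [a; nxt a] are the   *)
(* multiples of the 0-th critical word.                                   *)
Lemma base_part0 d x : is_chain n m i j d x -> (forall r, critical d r -> x (crit_word r) = 0) ->
  forall q, base_part x q = 0.
Proof.
move=> [_ Hw] Hcr [|a [|b [|c t]]] //=.
- have [//|/Hw [V Hh Hl Hd]] := eqVneq (x [:: a]) 0.
  move: Hh Hl Hd => /= Hh Hl; subst a => Hd.
  have := Hcr 0%N; rewrite /critical /= /base_deg /base_word -Hl eqxx /= path_deg1 mul0r addr0 -Hd path_deg1.
  by rewrite eqxx => /(_ isT).
- case: ifP => [/eqP Eb|//]; subst b.
  have [//|/Hw [V Hh Hl Hd]] := eqVneq (x [:: a; nxt a]) 0.
  move: Hh Hl Hd => /= Hh Hl; subst a => Hd.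
  have ji : (j == i) = false by rewrite -Hl; apply/negbTE; exact: nxt_neq.
  have := Hcr 0%N; rewrite /critical /= /base_deg /base_word ji -Hl eqxx orbT /= mul0r addr0 -Hd.
  by rewrite eqxx => /(_ isT).
Qed.

Lemma critical_succ d r : critical (d - (n%:Z - 2)) r -> critical d r.+1.
Proof.
rewrite /critical => /andP [-> /eqP E] /=; apply/eqP.
by rewrite -[d](subrK (n%:Z - 2)) E intS; ring.
Qed.

(* A cycle vanishing on all critical words is a boundary: by the homotopy *)
(* formula x = d(contract x) + loop_mul (strip_loop x), and strip_loop x  *)
(* is such a cycle with shorter words, hence a boundary d g by induction; *)
(* then x = d(contract x + loop_mul g).                                   *)
Lemma crit_cycle_boundary_bounded N (x : chain k) d : (forall p, x p != 0 -> (size p < N)%N) ->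
  is_cycle n m i j d x -> (forall r, critical d r -> x (crit_word r) = 0) -> is_boundary n m i j d x.
Proof.
elim: N x d => [|N IH] x d Hs [Hc Hcyc] Hcr.
  exists (fun _ => 0); split; first exact: zero_chain.
  move=> q; rewrite dchain0.
  by have [//|/Hs] := eqVneq (x q) 0.
have sv := chain_supp_valid Hc.
have [g [Hg Hgeq]] : is_boundary n m i j (d - (n%:Z - 2)) (strip_loop x).
  apply: IH.
  - move=> [|a p] /=; rewrite ?eqxx // => /Hs /=; lia.
  - split; first exact: strip_loop_chain.
    move=> q; rewrite -strip_loop_dchain //; case: q => [|a p] //=; exact: Hcyc.
  - move=> r /critical_succ Hr.
    have [t Et] := crit_word_head r.
    by rewrite Et /strip_loop -Et -[i :: nxt i :: crit_word r]/(crit_word r.+1) Hcr.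
exists (fun p => contract x p + loop_mul g p); split.
  apply: add_chain; first exact: contract_chain.
  have -> : d + 1 = d - (n%:Z - 2) + 1 + (n%:Z - 2) by ring.
  exact: loop_mul_chain.
move=> q; rewrite dchainD (homotopy_formula q sv) (contract0 _ Hcyc) (base_part0 Hc Hcr) addr0 addr0.
by rewrite (loop_mul_ext _ Hgeq) (loop_mul_dchain _ (chain_supp_valid Hg)).
Qed.

Lemma crit_cycle_boundary d (x : chain k) : is_cycle n m i j d x ->
  (forall r, critical d r -> x (crit_word r) = 0) -> is_boundary n m i j d x.
Proof.
move=> Hx Hcr; have [N HN] := chain_size_bound Hx.1.
exact: crit_cycle_boundary_bounded HN Hx Hcr.
Qed.

Lemma homology_rank0 d : (forall r, ~~ critical d r) ->
  homology_iso_free k n m i j d 0.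
Proof.
move=> Hc; exists (fun _ => 0); split.
- by move=> *; rewrite scaler0 addr0.
- move=> v; exists (fun _ => 0); split; last by rewrite thinmx0.
  by split; [exact: zero_chain | move=> q; rewrite dchain0].
move=> x Hx; split => // _; apply: crit_cycle_boundary => // r Hr.
by move: (Hc r); rewrite Hr.
Qed.

Hypothesis j_crit : (j == i) || (j == nxt i).

(* The homology classes: loop_cycle r = t^r b, where b is the word        *)
(* base_word (the identity of z_i, or b_{i, nxt i}).                      *)
Fixpoint loop_cycle r : chain k :=
  if r is r'.+1 then loop_mul (loop_cycle r') else (fun p => if p == base_word then 1 else 0).

Lemma loop_cycle_chain r : is_chain n m i j (base_deg + r%:Z * (n%:Z - 2)) (loop_cycle r).
Proof.
elim: r => [|r IH].
  rewrite mul0r addr0; split.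
    by exists [:: base_word] => p /=; case: ifP => [/eqP ->|]; rewrite ?eqxx ?inE.
  move=> p /=; case: ifP => [/eqP ->|]; rewrite ?eqxx // => _.
  rewrite /base_word /base_deg; case: ifP => [/eqP ji|ji].
    by split; rewrite ?valid1 // -ji.
  move: j_crit; rewrite ji /= => /eqP j_nxt.
  by split; rewrite ?valid_cons2 ?valid1 ?obj_i ?obj_nxt ?(eq_sym i) ?nxt_neq // j_nxt.
have -> : base_deg + r.+1%:Z * (n%:Z - 2) = base_deg + r%:Z * (n%:Z - 2) + (n%:Z - 2).
  by rewrite intS; ring.
exact: loop_mul_chain.
Qed.

Lemma loop_cycle_closed r q : dchain n m (loop_cycle r) q = 0.
Proof.
elim: r q => [|r IH] q.
  have [le2|gt2] := leqP (size q) 2; first exact: dchain_small.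
  have [eq3|ne3] := eqVneq (size q) 3; last first.
    apply: dchain_eq0_shorter => p Hp /=; case: ifP => // /eqP Ep.
    by move: Hp; rewrite Ep /base_word; case: ifP => _ /=; lia.
  case: q eq3 {gt2} => [|a [|b [|c [|d t]]]] // _.
  rewrite dchain_cons head_term_eq dchain_small // addr0 /=.
  case: ifP => [/eqP Ebw|_]; last by rewrite mulr0.
  move: Ebw; rewrite /base_word; case: ifP => // _ [-> ->].
  by rewrite dcoef_to_nxt // !mul0r.
rewrite /= -loop_mul_dchain; last exact: chain_supp_valid (loop_cycle_chain r).
exact: loop_mul0.
Qed.

Lemma loop_cycle_crit r : loop_cycle r (crit_word r) = 1.
Proof.
elim: r => [|r IH]; first by rewrite /= eqxx.
have [t Et] := crit_word_head r.
have -> : loop_cycle r.+1 (crit_word r.+1) = loop_mul (loop_cycle r) (i :: nxt i :: crit_word r) by [].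
rewrite Et loop_mul_eq eqxx nxt_neq // obj_nxt //= loop_sgn_nxt // -Et IH mulr1.
done.
Qed.

(* With a critical word of degree d, evaluation at it identifies the      *)
(* homology in degree d with k, the class of loop_cycle mapping to 1.      *)
Lemma homology_rank1 d r0 : critical d r0 -> homology_iso_free k n m i j d 1.
Proof.
move=> Hc0; have Ed : d = base_deg + r0%:Z * (n%:Z - 2) by case/andP: Hc0 => _ /eqP.
exists (fun x => \row_(l < 1) x (crit_word r0)); split.
- by move=> a x y _ _; apply/rowP => l; rewrite !mxE.
- move=> v; exists (fun p => v ord0 ord0 * loop_cycle r0 p); split.
    split; first by rewrite Ed; apply: scale_chain; exact: loop_cycle_chain.
    by move=> q; rewrite dchainZ loop_cycle_closed mulr0.
  by apply/rowP => l; rewrite !mxE loop_cycle_crit mulr1 (ord1 l).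
move=> x Hx; split.
- move/rowP/(_ ord0); rewrite !mxE => x0.
  by apply: crit_cycle_boundary => // r /critical_uniq/(_ Hc0) ->.
- case=> g [Hg Hgx]; apply/rowP => l; rewrite !mxE Hgx.
  apply: dchain_crit_word => p /(chain_supp_valid Hg); exact: valid_no_repeat.
Qed.

End FixedEnds.

Lemma poly_shift_rankP e s d : (0 < e)%N ->
  (poly_shift_rank e s d = 1%N /\ exists r : nat, d = s + r%:Z * e%:Z) \/
  (poly_shift_rank e s d = 0%N /\ forall r : nat, d != s + r%:Z * e%:Z).
Proof.
move=> e0; rewrite /poly_shift_rank; case: ifP => [/andP [H1 H2]|H].
- left; split => //; exists (absz ((d - s) %/ e%:Z)%Z).
  rewrite gez0_abs; last by rewrite divz_ge0 // ltz_nat.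
  rewrite divzK //; ring.
- right; split => // r; apply/eqP => Ed; move: H; rewrite Ed.
  have -> : s + r%:Z * e%:Z - s = r%:Z * e%:Z by ring.
  by rewrite dvdz_mull ?dvdzz // andbT -PoszM.
Qed.

Lemma critical_rankP i j d s :
  (forall r, critical i j d r = (d == s + r%:Z * (n%:Z - 2))) ->
  (poly_shift_rank (n - 2) s d = 1%N /\ exists r, critical i j d r) \/
  (poly_shift_rank (n - 2) s d = 0%N /\ forall r, ~~ critical i j d r).
Proof.
move=> Hc; have e0 : (0 < n - 2)%N by lia.
have En : ((n - 2)%N)%:Z = n%:Z - 2 by lia.
case: (poly_shift_rankP s d e0) => [[-> [r Er]]|[-> Hr]]; [left|right]; split => //.
  by exists r; rewrite Hc Er En eqxx.
by move=> r; rewrite Hc -En.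
Qed.

(* The case analysis of expected_rank: critical words exist exactly for *)
(* j = i (degrees r (n-2)), j = i + 1 (the same), and (i, j) = (m, 1)     *)
(* (degrees n - m + r (n-2)).                                             *)
Lemma expected_rankP i j d : obj i -> obj j ->
  (expected_rank n m i j d = 1%N /\ exists r, critical i j d r) \/
  (expected_rank n m i j d = 0%N /\ forall r, ~~ critical i j d r).
Proof.
move=> Hi Hj; rewrite /expected_rank.
case: ifP => [/eqP ji|jni].
  subst j; apply: (@critical_rankP _ _ _ 0) => // r.
  by rewrite /critical /base_deg /base_word !eqxx /= path_deg1.
case: ifP => [/andP [/eqP ji Hi2]|H2].
  subst j; apply: (@critical_rankP _ _ _ 0) => // r.
  have sci : nxt i = i.+1 by rewrite /nxt; case: ifP => // /eqP; lia.
  rewrite /critical /base_deg /base_word jni sci eqxx /= path_deg_cons2 path_deg1 /edge_deg ltnSn.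
  congr (_ == _); congr (_ + _); lia.
case: ifP => [/andP [/eqP im /eqP j1]|H3].
  subst i j; apply: (@critical_rankP _ _ _ (n%:Z - m%:Z)) => // r.
  have sci : nxt m = 1%N by rewrite /nxt eqxx.
  rewrite /critical /base_deg /base_word jni sci eqxx orbT /= path_deg_cons2 path_deg1 /edge_deg.
  have -> : (m < 1)%N = false by lia.
  congr (_ == _); congr (_ + _); lia.
right; split => // r; rewrite /critical jni /=.
suff -> : (j == nxt i) = false by [].
move: H2 H3; rewrite /nxt; case: ifP => [/eqP im|im] H2 H3.
  by move: H3; rewrite ?im ?eqxx.
have Hi' : (1 <= i <= m - 1)%N by move: Hi im; rewrite /obj => Hi /negbT; lia.
by move: H2; rewrite Hi' andbT.
Qed.

Lemma homology_expected i j d : obj i -> obj j ->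
  homology_iso_free k n m i j d (expected_rank n m i j d).
Proof.
move=> Hi Hj; case: (expected_rankP d Hi Hj) => [[-> [r0 Hr0]]|[-> Hr]].
  by apply: (homology_rank1 Hi Hj _ Hr0); case/andP: Hr0.
exact: homology_rank0.
Qed.

End MorphismComplex.

Theorem mainTheorem2 (k : comPzRingType) (n m : nat) :
  (3 <= n)%N -> (3 <= m)%N ->
  forall i j : nat, (1 <= i <= m)%N -> (1 <= j <= m)%N ->
  forall d : int, homology_iso_free k n m i j d (expected_rank n m i j d).
Proof.
move=> n_ge3 m_ge3 i j Hi Hj d.
by apply: homology_expected => //; rewrite /obj; lia.
Qed.
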